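(* Let $U=\begin{bmatrix} a & b\\ c & d\end{bmatrix}$ be a $2\times 2$ unitary matrix with either $abcd\neq0$ or $a=0$. Then $\mathcal{M}_s(U)\setminus(\mathcal{M}_{unif}\cup\mathcal{M}_{exp})\neq\emptyset$, i.e. the quantum walk defined by $U$ has a stationary measure that is neither uniform nor of the exponential form defining $\mathcal{M}_{exp}$.
   Context: Two-state quantum walk on $\mathbb{Z}$: states $\Psi=(\Psi(x))_{x\in\mathbb{Z}}\in(\mathbb{C}^2)^{\mathbb{Z}}$, $\Psi(x)={}^T[\Psi^L(x),\Psi^R(x)]$; evolution $(U^{(s)}\Psi)^L(x)=a\Psi^L(x+1)+b\Psi^R(x+1)$, $(U^{(s)}\Psi)^R(x)=c\Psi^L(x-1)+d\Psi^R(x-1)$. $\phi(\Psi)(x)=|\Psi^L(x)|^2+|\Psi^R(x)|^2$. $\mathcal{M}_s(U)=\{\mu\in[0,\infty)^{\mathbb{Z}}\setminus\{0\}:\exists\Psi_0$ with $\phi((U^{(s)})^n\Psi_0)=\mu$ for all $n\ge0\}$. $\mathcal{M}_{unif}=\{\mu_u^{(c)}:c>0\}$ with $\mu_u^{(c)}(x)=c$ for all $x$. $\mathcal{M}_{exp}$ is the set of measures $\mu$ on $\mathbb{Z}$ for which there exist constants $C_+,C_0,C_->0$ and $\gamma\in(0,1)$ with $\mu(x)=C_+\gamma^{-|x|}$ for $x\ge1$, $\mu(0)=C_0$, $\mu(x)=C_-\gamma^{-|x|}$ for $x\le -1$. *)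

(* Complex numbers: an arbitrary numClosedFieldType C
   (e.g. algC). *)
From HB Require Import structures.
From mathcomp Require Import all_boot all_order all_algebra.
Set Implicit Arguments. Unset Strict Implicit. Unset Printing Implicit Defensive.
Import Order.TTheory GRing.Theory Num.Theory.
Local Open Scope ring_scope.

(* A state Psi : int -> C * C, Psi x = (Psi^L(x), Psi^R(x)). *)
Definition qstate (C : numClosedFieldType) := int -> C * C.

Definition unitary (C : numClosedFieldType) (U : 'M[C]_2) : Prop :=
  U *m (map_mx Num.conj U)^T = 1%:M.

Definition walk_step (C : numClosedFieldType) (U : 'M[C]_2) (Psi : qstate C)
  : qstate C :=
  fun x =>
    (U 0 0 * (Psi (x + 1)).1 + U 0 1 * (Psi (x + 1)).2,
     U 1 0 * (Psi (x - 1)).1 + U 1 1 * (Psi (x - 1)).2).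

Definition phi (C : numClosedFieldType) (Psi : qstate C) : int -> C :=
  fun x => `|(Psi x).1| ^+ 2 + `|(Psi x).2| ^+ 2.

Definition stationary_measure (C : numClosedFieldType) (U : 'M[C]_2)
  (mu : int -> C) : Prop :=
  (forall x, 0 <= mu x) /\ (exists x, mu x != 0) /\
  exists Psi0 : qstate C,
    forall n : nat, phi (iter n (walk_step U) Psi0) = mu.

Definition uniform_measure (C : numClosedFieldType) (mu : int -> C) : Prop :=
  exists c : C, 0 < c /\ forall x, mu x = c.

Definition exp_measure (C : numClosedFieldType) (mu : int -> C) : Prop :=
  exists (Cp C0 Cm gamma : C),
    [/\ 0 < Cp, 0 < C0, 0 < Cm, 0 < gamma & gamma < 1] /\
    (forall x : int, (1 <= x)%R -> mu x = Cp * gamma ^- (absz x)) /\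
    mu 0 = C0 /\
    (forall x : int, (x <= -1)%R -> mu x = Cm * gamma ^- (absz x)).

(** Both walks have an eigenstate of the evolution with eigenvalue of modulus
    one, so its measure is stationary.  If [abcd <> 0], take a square root [l]
    of [det U]; the geometric state [x |-> z^x (l z - d, c)] is an eigenstate
    with eigenvalue [l] as soon as [a z^2 - 2 l z + d = 0], and unitarity
    ([d = l^2 conj(a)], [|a|^2 + |b|^2 = 1]) yields the root
    [z = l (1 + |b|) / a], of modulus [(1 + |b|) / |a| > 1].  Its measure
    [|z|^(2x) mu(0)] is not constant and decreases to the left, whereas
    measures in [M_exp] increase in both directions.  If [a = 0], then [d = 0]
    and a state supported on [{0, 1}] is an eigenstate; its measure vanishes
    at [2], while uniform and exponential measures are positive everywhere. *)
From mathcomp Require Import all_boot all_order all_algebra.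
From mathcomp Require Import ring zify.
From Stdlib Require Import FunctionalExtensionality.
Set Implicit Arguments. Unset Strict Implicit. Unset Printing Implicit Defensive.
Import Order.TTheory GRing.Theory Num.Theory.
Local Open Scope ring_scope.

Section QuantumWalk.

Variable C : numClosedFieldType.
Implicit Types (U : 'M[C]_2) (Psi : qstate C) (mu : int -> C).

Lemma norm_eq1_mul_conj (x : C) : x * x^* = 1 -> `|x| = 1.
Proof. by move=> h; apply/eqP; rewrite -sqrp_eq1 // normCK h. Qed.

Lemma sqrtC_norm1 (x : C) : `|x| = 1 -> `|sqrtC x| = 1.
Proof. by move=> hx; apply/eqP; rewrite -sqrp_eq1 // -normrX sqrtCK hx. Qed.

Lemma unitary_entries U : unitary U ->
  [/\ U 0 0 * (U 0 0)^* + U 0 1 * (U 0 1)^* = 1,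
      U 0 0 * (U 1 0)^* + U 0 1 * (U 1 1)^* = 0 &
      U 1 0 * (U 1 0)^* + U 1 1 * (U 1 1)^* = 1].
Proof.
rewrite /unitary => HU.
have E i j : \sum_k U i k * (U j k)^* = (i == j)%:R.
  have := congr1 (fun M : 'M[C]_2 => M i j) HU; rewrite !mxE => <-.
  by apply: eq_bigr => k _; rewrite !mxE.
have o1 : lift ord0 ord0 = 1 :> 'I_2 by apply/val_inj.
by split; [have := E 0 0 | have := E 0 1 | have := E 1 1];
  rewrite big_ord_recl big_ord1 o1.
Qed.

(* Orthonormality of the rows forces [(c, d) = det U * (- conj b, conj a)]. *)
Lemma unitary2_det (a b c d : C) :
  a * a^* + b * b^* = 1 -> a * c^* + b * d^* = 0 -> c * c^* + d * d^* = 1 ->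
  d = (a * d - b * c) * a^* /\ `|a * d - b * c| = 1.
Proof.
move=> Hab Horth Hcd; set D := a * d - b * c.
have Horth' : a^* * c + b^* * d = 0.
  have := congr1 Num.conj Horth.
  by rewrite rmorphD !rmorphM /= !conjCK rmorph0 mulrC [b^* * _]mulrC.
have Ed : d = D * a^*.
  apply/eqP; rewrite -subr_eq0.
  have -> : d - D * a^* = d * (1 - (a * a^* + b * b^*)) + b * (a^* * c + b^* * d).
    by rewrite /D; ring.
  by rewrite Hab Horth' subrr mulr0 mulr0 addr0.
have Ec : c = - (D * b^*).
  apply/eqP; rewrite -subr_eq0.
  have -> : c - - (D * b^*) = c * (1 - (a * a^* + b * b^*)) + a * (a^* * c + b^* * d).
    by rewrite /D; ring.
  by rewrite Hab Horth' subrr mulr0 mulr0 addr0.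
split=> //; apply: norm_eq1_mul_conj; clearbody D.
by rewrite -Hcd -[LHS]mulr1 -Hab Ec Ed rmorphN !rmorphM /= !conjCK; ring.
Qed.

Definition eigenstate U (l : C) Psi :=
  forall x, walk_step U Psi x = (l * (Psi x).1, l * (Psi x).2).

Lemma iter_eigenstate U l Psi n x : eigenstate U l Psi ->
  iter n (walk_step U) Psi x = (l ^+ n * (Psi x).1, l ^+ n * (Psi x).2).
Proof.
move=> hPsi; elim: n x => [|n IH] x /=; first by rewrite !mul1r; case: (Psi x).
have := hPsi x; rewrite /walk_step !IH /= => -[h1 h2].
by congr pair; rewrite exprSr -mulrA; [rewrite -h1 | rewrite -h2]; ring.
Qed.

Lemma phi_ge0 Psi x : 0 <= phi Psi x.
Proof. by rewrite /phi addr_ge0 // exprn_ge0. Qed.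

Lemma phi_eq0 Psi x : (phi Psi x == 0) = ((Psi x).1 == 0) && ((Psi x).2 == 0).
Proof. by rewrite /phi paddr_eq0 ?exprn_ge0 // !sqrf_eq0 !normr_eq0. Qed.

Lemma eigenstate_stationary U l Psi x0 :
  eigenstate U l Psi -> `|l| = 1 -> phi Psi x0 != 0 ->
  stationary_measure U (phi Psi).
Proof.
move=> hPsi hl hx0; split; [exact: phi_ge0 | split; first by exists x0].
exists Psi => n; apply: functional_extensionality => x.
by rewrite /phi (iter_eigenstate n x hPsi) /= !normrM normrX hl expr1n !mul1r.
Qed.

Lemma uniform_measure_const mu x y : uniform_measure mu -> mu x = mu y.
Proof. by case=> c [_ hc]; rewrite !hc. Qed.

Lemma uniform_measure_gt0 mu x : uniform_measure mu -> 0 < mu x.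
Proof. by case=> c [c_gt0 ->]. Qed.

Lemma exp_measure_gt0 mu x : exp_measure mu -> 0 < mu x.
Proof.
case=> [Cp [C0 [Cm [g [[Cp_gt0 C0_gt0 Cm_gt0 g_gt0 _] [hp [h0 hm]]]]]]].
have pos (K : C) n : 0 < K -> 0 < K * g ^- n.
  by move=> K_gt0; rewrite mulr_gt0 // invr_gt0 exprn_gt0.
case: (ltrgtP x 0) => [x_lt0 | x_gt0 | ->]; last by rewrite h0.
- by rewrite hm ?pos //; lia.
- by rewrite hp ?pos //; lia.
Qed.

Lemma exp_measure_increasing_left mu : exp_measure mu -> mu (-1) < mu (-2).
Proof.
case=> [Cp [C0 [Cm [g [[_ _ Cm_gt0 g_gt0 g_lt1] [_ [_ hm]]]]]]].
rewrite !hm // ltr_pM2l // ltf_pV2 ?posrE ?exprn_gt0 //.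
by rewrite expr1 expr2 gtr_pMr.
Qed.

Definition geom_state (z p q : C) : qstate C := fun x => (z ^ x * p, z ^ x * q).

Lemma phi_geom_stateD1 z p q x : z != 0 ->
  phi (geom_state z p q) (x + 1) = `|z| ^+ 2 * phi (geom_state z p q) x.
Proof.
move=> z_neq0; rewrite /phi /geom_state /= exprzDr ?unitfE // expr1z.
by rewrite !normrM !exprMn; ring.
Qed.

Lemma geom_state_eigenstate U z l : z != 0 ->
  l ^+ 2 = U 0 0 * U 1 1 - U 0 1 * U 1 0 ->
  U 0 0 * z ^+ 2 - 2 * l * z + U 1 1 = 0 ->
  eigenstate U l (geom_state z (l * z - U 1 1) (U 1 0)).
Proof.
move=> z_neq0 hl hz x; rewrite /walk_step /geom_state /=.
rewrite !exprzDr ?unitfE // expr1z exprN1; congr pair; last by field.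
apply/eqP; rewrite -subr_eq0; apply/eqP.
transitivity (z ^ x * l * (U 0 0 * z ^+ 2 - 2 * l * z + U 1 1)
              + z ^ x * z * (l ^+ 2 - (U 0 0 * U 1 1 - U 0 1 * U 1 0))); first by ring.
by rewrite hz hl subrr !mulr0 addr0.
Qed.

Lemma geom_measure_not_unif_exp z p q :
  1 < `|z| -> phi (geom_state z p q) 0 != 0 ->
  ~ uniform_measure (phi (geom_state z p q)) /\
  ~ exp_measure (phi (geom_state z p q)).
Proof.
move=> z_gt1 mu0_neq0; have z_neq0 : z != 0.
  by rewrite -normr_eq0 gt_eqF // (lt_trans ltr01 z_gt1).
have z2_gt1 : 1 < `|z| ^+ 2 by rewrite expr_gt1 // ltW.
split=> [/uniform_measure_const mu_const | /exp_measure_increasing_left].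
- have := mu_const (0 + 1) 0; rewrite phi_geom_stateD1 //.
  by move/(canRL (mulfK mu0_neq0)); rewrite divff // => /eqP; rewrite gt_eqF.
- have -> : (-1 : int)%R = -2 + 1 by [].
  by rewrite phi_geom_stateD1 // => /lt_geF; rewrite ler_peMl ?phi_ge0 // ltW.
Qed.

Lemma vanishing_measure_not_unif_exp mu x : mu x = 0 ->
  ~ uniform_measure mu /\ ~ exp_measure mu.
Proof.
by move=> mux0; split=> [/uniform_measure_gt0 | /exp_measure_gt0] /(_ x);
  rewrite mux0 ltxx.
Qed.

Definition walk_root (a b l : C) := l * (1 + `|b|) / a.

Lemma walk_root_eq (a b l : C) : a != 0 -> a * a^* + b * b^* = 1 ->
  a * walk_root a b l ^+ 2 - 2 * l * walk_root a b l + l ^+ 2 * a^* = 0.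
Proof.
move=> a_neq0 Hab; apply: (mulfI a_neq0); rewrite mulr0.
have Haa : a * a^* = 1 - `|b| ^+ 2 by rewrite normCK -Hab addrK.
transitivity (l ^+ 2 * (a * a^* - (1 - `|b| ^+ 2))); first by rewrite /walk_root; field.
by rewrite Haa subrr mulr0.
Qed.

Lemma walk_root_norm_gt1 (a b l : C) : `|l| = 1 -> a != 0 -> b != 0 ->
  a * a^* + b * b^* = 1 -> 1 < `|walk_root a b l|.
Proof.
move=> hl a_neq0 b_neq0 Hab.
have a_gt0 : 0 < `|a| by rewrite normr_gt0.
have a_le1 : `|a| <= 1.
  by rewrite -(expr_le1 (n := 2)) ?normr_ge0 // -Hab normCK lerDl -normCK exprn_ge0.
rewrite /walk_root normf_div normrM hl mul1r ger0_norm ?addr_ge0 ?ler01 //.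
by rewrite ltr_pdivlMr // mul1r (le_lt_trans a_le1) // ltrDl normr_gt0.
Qed.

Definition dimer_state (l c : C) : qstate C :=
  fun x => (if x == 0 then l else 0, if x == 1 then c else 0).

Lemma dimer_state_eigenstate U l : U 0 0 = 0 -> U 1 1 = 0 ->
  l ^+ 2 = U 0 1 * U 1 0 -> eigenstate U l (dimer_state l (U 1 0)).
Proof.
move=> a0 d0 hl x; rewrite /walk_step /dimer_state /= a0 d0 !mul0r add0r addr0.
have -> : (x + 1 == 1) = (x == 0) by rewrite -{2}(add0r 1) (inj_eq (addIr 1)).
rewrite subr_eq0.
by congr pair; [case: (x == 0) | case: (x == 1)]; rewrite ?mulr0 // mulrC.
Qed.

End QuantumWalk.

Theorem theorem2 (C : numClosedFieldType) (U : 'M[C]_2) :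
  unitary U ->
  (U 0 0 * U 0 1 * U 1 0 * U 1 1 != 0 \/ U 0 0 = 0) ->
  exists mu : int -> C,
    stationary_measure U mu /\ ~ uniform_measure mu /\ ~ exp_measure mu.
Proof.
move=> /unitary_entries[Hab Horth Hcd] Hcase.
have [Hd HD] := unitary2_det Hab Horth Hcd.
set a := U 0 0 in Hab Horth Hd HD Hcase *; set b := U 0 1 in Hab Horth Hd HD Hcase *.
set c := U 1 0 in Horth Hcd Hd HD Hcase *; set d := U 1 1 in Horth Hcd Hd HD Hcase *.
case: Hcase => [|a0].
- rewrite !mulf_eq0 !negb_or => /andP[/andP[/andP[a_neq0 b_neq0] c_neq0] _].
  set l := sqrtC (a * d - b * c); have hl := sqrtC_norm1 HD.
  have hl2 : l ^+ 2 = a * d - b * c by rewrite sqrtCK.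
  have z_gt1 := walk_root_norm_gt1 hl a_neq0 b_neq0 Hab.
  set z := walk_root a b l in z_gt1.
  have z_neq0 : z != 0 by rewrite -normr_eq0 gt_eqF // (lt_trans ltr01 z_gt1).
  have hz : a * z ^+ 2 - 2 * l * z + d = 0 by rewrite Hd -hl2 walk_root_eq.
  have hPsi := geom_state_eigenstate z_neq0 hl2 hz.
  have phi0 : phi (geom_state z (l * z - d) c) 0 != 0.
    by rewrite phi_eq0 /= expr0z !mul1r (negbTE c_neq0) andbF.
  exists (phi (geom_state z (l * z - d) c)); split.
    exact: eigenstate_stationary hPsi hl phi0.
  exact: geom_measure_not_unif_exp z_gt1 phi0.
- have d0 : d = 0 by rewrite Hd a0 conjC0 mulr0.
  have hb : `|b| = 1 by apply: norm_eq1_mul_conj; rewrite -Hab a0 mul0r add0r.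
  have hc : `|c| = 1 by apply: norm_eq1_mul_conj; rewrite -Hcd d0 mul0r addr0.
  set l := sqrtC (b * c).
  have hl : `|l| = 1 by rewrite sqrtC_norm1 // normrM hb hc mulr1.
  have hPsi := dimer_state_eigenstate a0 d0 (sqrtCK (b * c)).
  have phi0 : phi (dimer_state l c) 0 != 0.
    by rewrite phi_eq0 /= -normr_eq0 hl oner_eq0.
  exists (phi (dimer_state l c)); split.
    exact: eigenstate_stationary hPsi hl phi0.
  by apply: (@vanishing_measure_not_unif_exp _ _ 2); apply/eqP; rewrite phi_eq0 /= eqxx.
Qed.
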